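(* In the iPALM setting described in the context, suppose $\beta_k=\beta_0\sigma^k$ and $\rho_k=\rho_0\sigma^{-k}$ for all $k\ge0$, with $\beta_0>0$, $\rho_0>0$, $\sigma>1$. Then for every $k\ge0$, $$\sqrt{\beta_0\rho_0\|x^{(k+1)}-x^*\|^2+\|\lambda^{(k+1)}-\lambda^*\|^2}\le\sum_{i=0}^k\frac{2\beta_i\bar\varepsilon_i}{\sqrt{\beta_0\rho_0}}+\sqrt{\beta_0\rho_0\|x^{(0)}-x^*\|^2+\|\lambda^{(0)}-\lambda^*\|^2}.$$
   Context: iPALM setting. Consider $\min_x G(x):=f(x)+r(x)$ subject to $A_Ex=b_E$, $A_Ix\le b_I$, where $f:\mathbb R^n\to\mathbb R$ is convex, differentiable with $L_f$-Lipschitz gradient and $\mu$-strongly convex ($\mu\ge0$), and $r$ is proper closed convex. Write $A=[A_E;A_I]$, $b=[b_E;b_I]$, and multipliers $\lambda=[\lambda_E;\lambda_I]$. Assume $(x^*,\lambda^* )$ satisfies the KKT conditions $0\in\partial G(x^* )+A^\top\lambda^*$, $A_Ex^*=b_E$, $A_Ix^*\le b_I$, $\lambda_I^*\ge0$, $\langle\lambda_I^*,A_Ix^*-b_I\rangle=0$. The augmented Lagrangian is $\mathcal L_\beta(x,\lambda)=G(x)+\langle\lambda_E,A_Ex-b_E\rangle+\frac\beta2\|A_Ex-b_E\|^2+\frac1{2\beta}\big(\|[\beta(A_Ix-b_I)+\lambda_I]_+\|^2-\|\lambda_I\|^2\big)$, with $[\cdot]_+$ the componentwise positive part. Given $x^{(0)}\in\mathrm{dom}(G)$,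 $\lambda^{(0)}$, and positive numbers $\beta_k,\rho_k$ and $\bar\varepsilon_k\ge0$, the iPALM iterates satisfy for each $k\ge0$: with $\Psi_k(x)=\mathcal L_{\beta_k}(x,\lambda^{(k)})+\frac{\rho_k}2\|x-x^{(k)}\|^2$, the point $x^{(k+1)}$ is any point with $\mathrm{dist}(0,\partial\Psi_k(x^{(k+1)}))\le\bar\varepsilon_k$, and $\lambda_E^{(k+1)}=\lambda_E^{(k)}+\beta_k(A_Ex^{(k+1)}-b_E)$, $\lambda_I^{(k+1)}=[\lambda_I^{(k)}+\beta_k(A_Ix^{(k+1)}-b_I)]_+$. $\partial$ is the convex subdifferential and $\mathrm{dist}(0,S)=\inf_{s\in S}\|s\|$. *)

From HB Require Import structures.
From mathcomp Require Import all_boot all_order all_algebra.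
From mathcomp Require Import reals constructive_ereal.
Set Implicit Arguments. Unset Strict Implicit. Unset Printing Implicit Defensive.
Import Order.TTheory GRing.Theory Num.Theory.
Local Open Scope ring_scope.

Section IPALM.
Variable R : realType.

Definition dotv (n : nat) (u v : 'cV[R]_n) : R := \sum_(i < n) u i 0 * v i 0.
Definition normv (n : nat) (u : 'cV[R]_n) : R := Num.sqrt (dotv u u).

Definition pospart (m : nat) (u : 'cV[R]_m) : 'cV[R]_m :=
  map_mx (fun t => Num.max t 0) u.

Definition convex_fun (n : nat) (f : 'cV[R]_n -> R) : Prop :=
  forall x y (t : R), 0 <= t <= 1 ->
    f (t *: x + (1 - t) *: y) <= t * f x + (1 - t) * f y.

Definition strongly_convex (n : nat) (mu : R) (f : 'cV[R]_n -> R) : Prop :=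
  forall x y (t : R), 0 <= t <= 1 ->
    f (t *: x + (1 - t) *: y) <=
      t * f x + (1 - t) * f y - mu / 2 * t * (1 - t) * normv (x - y) ^+ 2.

Definition has_gradient (n : nat) (f : 'cV[R]_n -> R) (gradf : 'cV[R]_n -> 'cV[R]_n)
  : Prop :=
  forall x (e : R), 0 < e -> exists2 d : R, 0 < d &
    forall y, normv (y - x) < d ->
      `| f y - f x - dotv (gradf x) (y - x) | <= e * normv (y - x).

Definition lipschitz_grad (n : nat) (L : R) (gradf : 'cV[R]_n -> 'cV[R]_n) : Prop :=
  forall x y, normv (gradf x - gradf y) <= L * normv (x - y).

Definition proper_fun (n : nat) (r : 'cV[R]_n -> \bar R) : Prop :=
  (exists x, (r x < +oo)%E) /\ (forall x, (-oo < r x)%E).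

Definition convex_efun (n : nat) (r : 'cV[R]_n -> \bar R) : Prop :=
  forall x y : 'cV[R]_n, forall t : R, 0 <= t <= 1 ->
    (r (t *: x + (1 - t) *: y)%R <= t%:E * r x + (1 - t)%:E * r y)%E.

(* closed = lower semicontinuous *)
Definition lsc_efun (n : nat) (r : 'cV[R]_n -> \bar R) : Prop :=
  forall x (a : R), (a%:E < r x)%E -> exists2 d : R, 0 < d &
    forall y, normv (y - x) < d -> (a%:E < r y)%E.

Definition subgrad (n : nat) (F : 'cV[R]_n -> \bar R) (x g : 'cV[R]_n) : Prop :=
  F x \is a fin_num /\ forall y, (F x + (dotv g (y - x))%:E <= F y)%E.

(* dist(0, \partial F(x)) <= eps, i.e. inf_{g in \partial F(x)} ||g|| <= eps
   (with inf of the empty set = +oo) *)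
Definition dist0_subdiff_le (n : nat) (F : 'cV[R]_n -> \bar R) (x : 'cV[R]_n)
  (eps : R) : Prop :=
  forall delta : R, 0 < delta -> exists g, subgrad F x g /\ normv g < eps + delta.

Definition Gfun (n : nat) (f : 'cV[R]_n -> R) (r : 'cV[R]_n -> \bar R)
  (x : 'cV[R]_n) : \bar R := ((f x)%:E + r x)%E.

Definition aug_lag (n mE mI : nat) (f : 'cV[R]_n -> R) (r : 'cV[R]_n -> \bar R)
  (AE : 'M[R]_(mE, n)) (bE : 'cV[R]_mE) (AI : 'M[R]_(mI, n)) (bI : 'cV[R]_mI)
  (beta : R) (x : 'cV[R]_n) (lE : 'cV[R]_mE) (lI : 'cV[R]_mI) : \bar R :=
  (Gfun f r x +
   (dotv lE (AE *m x - bE) + beta / 2 * normv (AE *m x - bE) ^+ 2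
    + 1 / (2 * beta) * (normv (pospart (beta *: (AI *m x - bI) + lI)) ^+ 2
                        - normv lI ^+ 2))%:E)%E.

End IPALM.

From HB Require Import structures.
From mathcomp Require Import all_boot all_order all_algebra.
From mathcomp Require Import reals constructive_ereal.
From mathcomp Require Import lra ring.
Set Implicit Arguments. Unset Strict Implicit. Unset Printing Implicit Defensive.
Import Order.TTheory GRing.Theory Num.Theory.
Local Open Scope ring_scope.

(* Write D(x, lE, lI) = c |x - xs|^2 + |lE - lEs|^2 + |lI - lIs|^2 with
   c = beta_k rho_k = beta0 rho0.  Take g in the subdifferential of Psi_k at
   x_{k+1} with |g| close to epsb_k.  Subtracting the gradient of the smooth
   part of Psi_k from g gives a subgradient of G at x_{k+1} in the direction of
   xs, so monotonicity against the KKT subgradient of G at xs, the multiplier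
   updates (the inequality one is a projection onto the nonnegative orthant)
   and |a|^2 - |b|^2 <= 2 <a, a - b> yield
     D_{k+1} - D_k <= 2 beta_k <g, x_{k+1} - xs> <= 2 beta_k |g| sqrt(D_{k+1} / c).
   Hence sqrt D_{k+1} <= sqrt D_k + 2 beta_k epsb_k / sqrt c, which telescopes. *)

Section InnerProduct.
Variable R : realType.
Implicit Types (m n : nat).

Lemma dotvC n (u v : 'cV[R]_n) : dotv u v = dotv v u.
Proof. by apply: eq_bigr => i _; rewrite mulrC. Qed.

Lemma dotvDl n (u v w : 'cV[R]_n) : dotv (u + v) w = dotv u w + dotv v w.
Proof. by rewrite /dotv -big_split; apply: eq_bigr => i _; rewrite !mxE mulrDl. Qed.

Lemma dotvDr n (u v w : 'cV[R]_n) : dotv w (u + v) = dotv w u + dotv w v.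
Proof. by rewrite dotvC dotvDl !(dotvC w). Qed.

Lemma dotvZl n a (u w : 'cV[R]_n) : dotv (a *: u) w = a * dotv u w.
Proof. by rewrite /dotv mulr_sumr; apply: eq_bigr => i _; rewrite !mxE mulrA. Qed.

Lemma dotvZr n a (u w : 'cV[R]_n) : dotv w (a *: u) = a * dotv w u.
Proof. by rewrite dotvC dotvZl dotvC. Qed.

Lemma dotvNl n (u w : 'cV[R]_n) : dotv (- u) w = - dotv u w.
Proof. by rewrite -scaleN1r dotvZl mulN1r. Qed.

Lemma dotvNr n (u w : 'cV[R]_n) : dotv w (- u) = - dotv w u.
Proof. by rewrite dotvC dotvNl dotvC. Qed.

Lemma dotvBl n (u v w : 'cV[R]_n) : dotv (u - v) w = dotv u w - dotv v w.
Proof. by rewrite dotvDl dotvNl. Qed.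

Lemma dotvBr n (u v w : 'cV[R]_n) : dotv w (u - v) = dotv w u - dotv w v.
Proof. by rewrite dotvDr dotvNr. Qed.

Lemma dotv0l n (u : 'cV[R]_n) : dotv 0 u = 0.
Proof. by rewrite -(scale0r 0) dotvZl mul0r. Qed.

Lemma dotv_mulmx m n (A : 'M[R]_(m, n)) (u : 'cV[R]_m) (v : 'cV[R]_n) :
  dotv u (A *m v) = dotv (A^T *m u) v.
Proof.
rewrite /dotv; under eq_bigr do rewrite mxE big_distrr /=.
rewrite exchange_big /=; apply: eq_bigr => j _.
by rewrite mxE big_distrl /=; apply: eq_bigr => i _; rewrite mxE; ring.
Qed.

Lemma dotv_ge0 n (u : 'cV[R]_n) : 0 <= dotv u u.
Proof. by apply: sumr_ge0 => i _; rewrite -expr2 sqr_ge0. Qed.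

Lemma sqr_normv n (u : 'cV[R]_n) : normv u ^+ 2 = dotv u u.
Proof. by rewrite sqr_sqrtr // dotv_ge0. Qed.

Lemma normv_ge0 n (u : 'cV[R]_n) : 0 <= normv u.
Proof. exact: sqrtr_ge0. Qed.

Lemma sqr_normvDZ n (u v : 'cV[R]_n) t :
  normv (u + t *: v) ^+ 2 = normv u ^+ 2 + 2 * t * dotv u v + t ^+ 2 * normv v ^+ 2.
Proof. by rewrite !sqr_normv dotvDl !dotvDr !dotvZl !dotvZr (dotvC v u); ring. Qed.

Lemma sqr_normvZ n a (u : 'cV[R]_n) : normv (a *: u) ^+ 2 = a ^+ 2 * normv u ^+ 2.
Proof. by rewrite !sqr_normv dotvZl dotvZr mulrA expr2. Qed.

Lemma sqr_normvB_le n (u v : 'cV[R]_n) :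
  normv u ^+ 2 - normv v ^+ 2 <= 2 * dotv u (u - v).
Proof.
have := dotv_ge0 (u - v).
by rewrite !sqr_normv !dotvBl !dotvBr (dotvC v u); lra.
Qed.

Lemma dotv_normv0 n (u v : 'cV[R]_n) : normv u = 0 -> dotv u v = 0.
Proof.
move=> u0; have /eqP : dotv u u = 0 by rewrite -sqr_normv u0 expr0n.
rewrite psumr_eq0 => [/allP u_eq0|i _]; last by rewrite -expr2 sqr_ge0.
rewrite /dotv big1 // => i _; have := u_eq0 i (mem_index_enum _).
by rewrite -expr2 sqrf_eq0 => /eqP ->; rewrite mul0r.
Qed.

Lemma dotv_le_normv n (u v : 'cV[R]_n) : dotv u v <= normv u * normv v.
Proof.
have [u0|u_neq0] := eqVneq (normv u) 0; first by rewrite dotv_normv0 // u0 mul0r.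
have [v0|v_neq0] := eqVneq (normv v) 0.
  by rewrite dotvC dotv_normv0 // v0 mulr0.
have uv_gt0 : 0 < normv u * normv v.
  by rewrite mulr_gt0 // lt_def ?u_neq0 ?v_neq0 normv_ge0.
have := dotv_ge0 (normv v *: u - normv u *: v).
rewrite !dotvBl !dotvBr !dotvZl !dotvZr -!sqr_normv (dotvC v u) => H.
have : 0 <= (normv u * normv v) * (2 * (normv u * normv v - dotv u v)) by lra.
by rewrite pmulr_rge0 // pmulr_rge0 // subr_ge0.
Qed.

End InnerProduct.

Section RealField.
Variable R : realFieldType.

Lemma ler_of_ler_addt (a b C : R) :
  (forall t, 0 < t <= 1 -> a <= b + t * C) -> a <= b.
Proof.
move=> H; apply/ler_addgt0Pr => e e_gt0.
have C1_gt0 : 0 < `|C| + 1 by rewrite ltr_wpDl.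
set t := Num.min 1 (e / (`|C| + 1)).
have t_gt0 : 0 < t by rewrite lt_min ltr01 divr_gt0.
have tC1_le : t * (`|C| + 1) <= e by rewrite -ler_pdivlMr // ge_min lexx orbT.
have tC_le : t * C <= t * (`|C| + 1) by rewrite ler_pM2l // ler_wpDr // ler_norm.
have := H t; rewrite t_gt0 ge_min lexx => /(_ isT); lra.
Qed.

Lemma sqr_max0D_le (a b : R) :
  Num.max (a + b) 0 ^+ 2 <= Num.max a 0 ^+ 2 + 2 * Num.max a 0 * b + b ^+ 2.
Proof.
set ma := Num.max a 0; set mab := Num.max (a + b) 0.
have [a_ge0|a_lt0] := leP 0 a.
  have -> : ma = a by apply: max_l.
  have [ab_ge0|ab_lt0] := leP 0 (a + b).
    have -> : mab = a + b by apply: max_l.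
    nra.
  have -> : mab = 0 by apply/max_r/ltW.
  nra.
have -> : ma = 0 by apply/max_r/ltW.
have [ab_ge0|ab_lt0] := leP 0 (a + b).
  have -> : mab = a + b by apply: max_l.
  nra.
have -> : mab = 0 by apply/max_r/ltW.
nra.
Qed.

Lemma max0_update_le (beta l0 l s b a1 : R) :
  0 <= beta -> 0 <= l -> s <= b ->
  let l1 := Num.max (l0 + beta * (a1 - b)) 0 in
  (l1 - l) * (l1 - l0) + beta * (l * (s - b)) <= beta * ((l1 - l) * (a1 - s)).
Proof.
move=> beta_ge0 l_ge0 s_le_b /=.
set u := l0 + beta * (a1 - b); set l1 := Num.max u 0.
have l1_ge0 : 0 <= l1 by rewrite le_max lexx orbT.
(* [l1] is the projection of [u] onto [0, +oo[, and [l] lies in that set. *)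
have proj : 0 <= (l1 - l) * (u - l1).
  have [u_ge0|u_lt0] := leP 0 u.
    have -> : l1 = u by apply: max_l.
    by rewrite subrr mulr0.
  have -> : l1 = 0 by apply/max_r/ltW.
  nra.
have : 0 <= beta * (l1 * (b - s)) by rewrite !mulr_ge0 // subr_ge0.
rewrite /u in proj; nra.
Qed.

End RealField.

Lemma sqrtr_le_addr (R : rcfType) (P Q e : R) : 0 <= P -> 0 <= Q -> 0 <= e ->
  P - Q <= 2 * e * Num.sqrt P -> Num.sqrt P <= Num.sqrt Q + 2 * e.
Proof.
move=> P_ge0 Q_ge0 e_ge0.
rewrite -{1}(sqr_sqrtr P_ge0) -{1}(sqr_sqrtr Q_ge0).
have := sqrtr_ge0 P; have := sqrtr_ge0 Q.
set p := Num.sqrt P; set q := Num.sqrt Q => q_ge0 p_ge0 H.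
rewrite leNgt; apply/negP => q_lt; nra.
Qed.

Section PositivePart.
Variable R : realType.
Implicit Types (m : nat).

Lemma sqr_normv_pospartD_le m (a b : 'cV[R]_m) :
  normv (pospart (a + b)) ^+ 2 <=
  normv (pospart a) ^+ 2 + 2 * dotv (pospart a) b + normv b ^+ 2.
Proof.
rewrite !sqr_normv /dotv mulr_sumr -!big_split /=.
apply: ler_sum => i _; rewrite !mxE -!expr2 mulrA; exact: sqr_max0D_le.
Qed.

Lemma pospart_update_le m (beta : R) (l0 l1 l s b a1 : 'cV[R]_m) :
  0 <= beta -> (forall i, 0 <= l i 0) -> (forall i, s i 0 <= b i 0) ->
  dotv l (s - b) = 0 -> l1 = pospart (l0 + beta *: (a1 - b)) ->
  dotv (l1 - l) (l1 - l0) <= beta * dotv (l1 - l) (a1 - s).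
Proof.
move=> beta_ge0 l_ge0 s_le_b compl ->.
rewrite -[leLHS]addr0 -{1}(mulr0 beta) -compl /dotv !mulr_sumr -big_split /=.
apply: ler_sum => i _; rewrite !mxE; exact: max0_update_le.
Qed.

End PositivePart.

Section ConvexAnalysis.
Variables (R : realType) (n : nat).
Implicit Types (F : 'cV[R]_n -> \bar R) (x g : 'cV[R]_n).

Lemma eq_subgrad F1 F2 x g : F1 =1 F2 -> subgrad F1 x g -> subgrad F2 x g.
Proof. by move=> eqF [F1x_fin F1_sub]; split=> [|y]; rewrite -!eqF. Qed.

Lemma convex_efun_Gfun (f : 'cV[R]_n -> R) (r : 'cV[R]_n -> \bar R) :
  convex_fun f -> convex_efun r -> convex_efun (Gfun f r).
Proof.
move=> f_cvx r_cvx x y t t01; rewrite /Gfun.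
rewrite !muleDr ?fin_num_adde_defr // addeACA -!EFinM -EFinD.
apply: leeD; [rewrite lee_fin|]; [exact: f_cvx|exact: r_cvx].
Qed.

Lemma Gfun_gtNy (f : 'cV[R]_n -> R) (r : 'cV[R]_n -> \bar R) x :
  (-oo < r x)%E -> (-oo < Gfun f r x)%E.
Proof. by rewrite /Gfun !ltNye; case: (r x). Qed.

Lemma subgrad_add_smooth_monotone F (H : 'cV[R]_n -> R) x1 xs g gs v (C : R) :
  convex_efun F -> (forall z, (-oo < F z)%E) ->
  (forall t, 0 < t <= 1 ->
     H (x1 + t *: (xs - x1)) <= H x1 + t * dotv v (xs - x1) + t ^+ 2 * C) ->
  subgrad F xs gs -> subgrad (fun z => F z + (H z)%:E)%E x1 g ->
  0 <= dotv (g - v - gs) (x1 - xs).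
Proof.
move=> F_cvx F_gtNy H_upper [Fxs_fin gs_sub] [FHx1_fin g_sub].
have [fs Efs] : exists fs, F xs = fs%:E by exists (fine (F xs)); rewrite fineK.
have [f1 Ef1] : exists f1, F x1 = f1%:E.
  by exists (fine (F x1)); rewrite fineK //; move: FHx1_fin; rewrite fin_numD => /andP[].
set d := xs - x1 in H_upper *.
have g_v_dir : dotv (g - v) d <= fs - f1.
  apply: (@ler_of_ler_addt _ _ _ C) => t /andP[t_gt0 t_le1].
  have Ezt : t *: xs + (1 - t) *: x1 = x1 + t *: d.
    by rewrite /d scalerBr scalerBl scale1r addrCA addrA.
  have := F_cvx xs x1 t; rewrite Ezt Efs Ef1 -!EFinM -EFinD ltW //= => /(_ t_le1).
  case Eft : (F (x1 + t *: d)) => [ft| |] Fzt_le; last 2 first.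
  - by move: Fzt_le; rewrite leye_eq.
  - by have := F_gtNy (x1 + t *: d); rewrite Eft.
  move: Fzt_le; rewrite lee_fin => Fzt_le.
  have := g_sub (x1 + t *: d).
  have -> : x1 + t *: d - x1 = t *: d by rewrite addrC addKr.
  rewrite Ef1 Eft -!EFinD lee_fin dotvZr.
  have := H_upper t; rewrite t_gt0 t_le1 => /(_ isT) H_le g_le.
  suff : t * dotv (g - v) d <= t * (fs - f1 + t * C) by rewrite ler_pM2l.
  rewrite dotvBl; lra.
have := gs_sub x1; rewrite Efs Ef1 -EFinD lee_fin.
have -> : x1 - xs = - d by rewrite opprB.
rewrite !dotvBl !dotvNr in g_v_dir *; lra.
Qed.

End ConvexAnalysis.

Section AugmentedLagrangian.
Variables (R : realType) (n mE mI : nat).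
Variables (AE : 'M[R]_(mE, n)) (bE : 'cV[R]_mE) (AI : 'M[R]_(mI, n)) (bI : 'cV[R]_mI).
Variables (beta rho : R) (x0 : 'cV[R]_n) (lE0 : 'cV[R]_mE) (lI0 : 'cV[R]_mI).

Definition alm_smooth (z : 'cV[R]_n) : R :=
  dotv lE0 (AE *m z - bE) + beta / 2 * normv (AE *m z - bE) ^+ 2
  + 1 / (2 * beta) * (normv (pospart (beta *: (AI *m z - bI) + lI0)) ^+ 2
                      - normv lI0 ^+ 2)
  + rho / 2 * normv (z - x0) ^+ 2.

Definition alm_grad (z : 'cV[R]_n) : 'cV[R]_n :=
  AE^T *m (lE0 + beta *: (AE *m z - bE))
  + AI^T *m pospart (lI0 + beta *: (AI *m z - bI)) + rho *: (z - x0).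

Lemma aug_lag_proxE (f : 'cV[R]_n -> R) (r : 'cV[R]_n -> \bar R) z :
  (aug_lag f r AE bE AI bI beta z lE0 lI0 + (rho / 2 * normv (z - x0) ^+ 2)%:E)%E
  = (Gfun f r z + (alm_smooth z)%:E)%E.
Proof. by rewrite /aug_lag -addeA. Qed.

Lemma alm_smooth_upper (x1 d : 'cV[R]_n) t : 0 < beta -> 0 <= t ->
  alm_smooth (x1 + t *: d) <= alm_smooth x1 + t * dotv (alm_grad x1) d
    + t ^+ 2 * (beta / 2 * normv (AE *m d) ^+ 2 + beta / 2 * normv (AI *m d) ^+ 2
                + rho / 2 * normv d ^+ 2).
Proof.
move=> beta_gt0 t_ge0.
rewrite /alm_smooth /alm_grad !dotvDl -!dotv_mulmx !dotvDl !dotvZl [lI0 + _]addrC.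
set a := beta *: (AI *m x1 - bI) + lI0.
have -> : AE *m (x1 + t *: d) - bE = (AE *m x1 - bE) + t *: (AE *m d).
  by rewrite mulmxDr -scalemxAr addrAC.
have -> : beta *: (AI *m (x1 + t *: d) - bI) + lI0 = a + (t * beta) *: (AI *m d).
  by rewrite /a mulmxDr -scalemxAr addrAC scalerDr scalerA mulrC addrAC.
have -> : x1 + t *: d - x0 = (x1 - x0) + t *: d by rewrite addrAC.
rewrite !sqr_normvDZ.
have pos_le : 1 / (2 * beta) * (normv (pospart (a + (t * beta) *: (AI *m d))) ^+ 2
                                 - normv lI0 ^+ 2)
  <= 1 / (2 * beta) * (normv (pospart a) ^+ 2 - normv lI0 ^+ 2)
     + t * dotv (pospart a) (AI *m d) + t ^+ 2 * (beta / 2 * normv (AI *m d) ^+ 2).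
  have := sqr_normv_pospartD_le a ((t * beta) *: (AI *m d)).
  rewrite dotvZr sqr_normvZ => pos_sqr_le.
  have -> : 1 / (2 * beta) * (normv (pospart a) ^+ 2 - normv lI0 ^+ 2)
      + t * dotv (pospart a) (AI *m d) + t ^+ 2 * (beta / 2 * normv (AI *m d) ^+ 2)
    = 1 / (2 * beta) * (normv (pospart a) ^+ 2
        + 2 * (t * beta * dotv (pospart a) (AI *m d))
        + (t * beta) ^+ 2 * normv (AI *m d) ^+ 2 - normv lI0 ^+ 2).
    by field; rewrite gt_eqF.
  by apply: ler_wpM2l; [rewrite divr_ge0 ?mulr_ge0 ?ltW | lra].
rewrite dotvDr dotvZr; lra.
Qed.

End AugmentedLagrangian.

Section IPALMStep.
Variables (R : realType) (n mE mI : nat) (f : 'cV[R]_n -> R) (r : 'cV[R]_n -> \bar R).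
Variables (AE : 'M[R]_(mE, n)) (bE : 'cV[R]_mE) (AI : 'M[R]_(mI, n)) (bI : 'cV[R]_mI).
Variables (xs : 'cV[R]_n) (lEs : 'cV[R]_mE) (lIs : 'cV[R]_mI).
Hypotheses (f_cvx : convex_fun f) (r_cvx : convex_efun r)
  (r_gtNy : forall x, (-oo < r x)%E).
Hypotheses (kkt_stat : exists g, subgrad (Gfun f r) xs g /\
                                 g + AE^T *m lEs + AI^T *m lIs = 0)
  (feasE : AE *m xs = bE) (feasI : forall i, (AI *m xs) i 0 <= bI i 0)
  (lIs_ge0 : forall i, 0 <= lIs i 0) (compl : dotv lIs (AI *m xs - bI) = 0).

Definition kkt_dist2 (c : R) (x : 'cV[R]_n) (lE : 'cV[R]_mE) (lI : 'cV[R]_mI) : R :=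
  c * normv (x - xs) ^+ 2 + (normv (lE - lEs) ^+ 2 + normv (lI - lIs) ^+ 2).

Lemma kkt_dist2_ge0 c x lE lI : 0 <= c -> 0 <= kkt_dist2 c x lE lI.
Proof. by move=> c_ge0; rewrite !addr_ge0 ?mulr_ge0 ?sqr_ge0 ?normv_ge0. Qed.

Lemma normv_le_sqrt_kkt_dist2 c x lE lI : 0 <= c ->
  Num.sqrt c * normv (x - xs) <= Num.sqrt (kkt_dist2 c x lE lI).
Proof.
move=> c_ge0; rewrite -[normv _]ger0_norm ?normv_ge0 // -sqrtr_sqr -sqrtrM //.
by rewrite ler_sqrt ?kkt_dist2_ge0 // lerDl addr_ge0 ?sqr_ge0.
Qed.

Lemma ipalm_energy_le (beta rho : R) x0 x1 lE0 lE1 lI0 lI1 g :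
  0 < beta -> 0 < rho ->
  subgrad (fun z => aug_lag f r AE bE AI bI beta z lE0 lI0
                    + (rho / 2 * normv (z - x0) ^+ 2)%:E)%E x1 g ->
  lE1 = lE0 + beta *: (AE *m x1 - bE) ->
  lI1 = pospart (lI0 + beta *: (AI *m x1 - bI)) ->
  kkt_dist2 (beta * rho) x1 lE1 lI1 - kkt_dist2 (beta * rho) x0 lE0 lI0
  <= 2 * beta * dotv g (x1 - xs).
Proof.
move=> beta_gt0 rho_gt0 g_sub lE1_E lI1_E.
have [gs [gs_sub gs_E]] := kkt_stat.
have mono : 0 <= dotv (g - alm_grad AE bE AI bI beta rho x0 lE0 lI0 x1 - gs) (x1 - xs).
  apply: (subgrad_add_smooth_monotone (convex_efun_Gfun f_cvx r_cvx)
            (fun z => Gfun_gtNy f (r_gtNy z)) _ gs_sub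
            (eq_subgrad (aug_lag_proxE AE bE AI bI beta rho x0 lE0 lI0 f r) g_sub)).
  by move=> t /andP[t_gt0 _]; apply: alm_smooth_upper; rewrite ?ltW.
set y := x1 - xs in mono *.
have gs_y : dotv gs y = - dotv lEs (AE *m y) - dotv lIs (AI *m y).
  have : dotv (gs + AE^T *m lEs + AI^T *m lIs) y = 0 by rewrite gs_E dotv0l.
  by rewrite !dotvDl -!dotv_mulmx; lra.
rewrite /alm_grad -lE1_E -lI1_E !dotvBl !dotvDl -!dotv_mulmx dotvZl gs_y in mono.
have dualE : beta * dotv (lE1 - lEs) (AE *m y) = dotv (lE1 - lEs) (lE1 - lE0).
  have -> : lE1 - lE0 = beta *: (AE *m x1 - bE) by rewrite lE1_E addrC addKr.
  by rewrite mulmxBr feasE dotvZr.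
have dualI : dotv (lI1 - lIs) (lI1 - lI0) <= beta * dotv (lI1 - lIs) (AI *m y).
  by rewrite mulmxBr; apply: pospart_update_le; rewrite ?ltW.
have x_sqr := sqr_normvB_le y (x0 - xs).
have lE_sqr := sqr_normvB_le (lE1 - lEs) (lE0 - lEs).
have lI_sqr := sqr_normvB_le (lI1 - lIs) (lI0 - lIs).
rewrite /y !opprB !subrKA -/y in x_sqr lE_sqr lI_sqr.
have := ler_wpM2l (mulr_ge0 (ltW beta_gt0) (ltW rho_gt0)) x_sqr.
have := mulr_ge0 (ltW beta_gt0) mono.
rewrite /kkt_dist2 (dotvC (x1 - x0)) !dotvBl in dualE dualI lE_sqr lI_sqr *.
lra.
Qed.

Lemma ipalm_step (beta rho c eps : R) x0 x1 lE0 lE1 lI0 lI1 :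
  0 < beta -> 0 < rho -> beta * rho = c -> 0 <= eps ->
  dist0_subdiff_le (fun z => aug_lag f r AE bE AI bI beta z lE0 lI0
                             + (rho / 2 * normv (z - x0) ^+ 2)%:E)%E x1 eps ->
  lE1 = lE0 + beta *: (AE *m x1 - bE) ->
  lI1 = pospart (lI0 + beta *: (AI *m x1 - bI)) ->
  Num.sqrt (kkt_dist2 c x1 lE1 lI1)
  <= 2 * beta * eps / Num.sqrt c + Num.sqrt (kkt_dist2 c x0 lE0 lI0).
Proof.
move=> beta_gt0 rho_gt0 <- eps_ge0 dist_le lE1_E lI1_E.
have c_gt0 : 0 < beta * rho by rewrite mulr_gt0.
have c_ge0 := ltW c_gt0.
have sc_gt0 : 0 < Num.sqrt (beta * rho) by rewrite sqrtr_gt0.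
set P := kkt_dist2 _ x1 _ _; set Q := kkt_dist2 _ x0 _ _.
apply: (@ler_of_ler_addt _ _ _ (2 * beta / Num.sqrt (beta * rho)))
  => delta /andP[delta_gt0 _].
have [g [g_sub g_lt]] := dist_le delta delta_gt0.
have y_le : normv (x1 - xs) <= Num.sqrt P / Num.sqrt (beta * rho).
  by rewrite ler_pdivlMr // mulrC; apply: normv_le_sqrt_kkt_dist2.
have e_ge0 : 0 <= beta * (eps + delta) / Num.sqrt (beta * rho).
  by rewrite divr_ge0 ?sqrtr_ge0 // mulr_ge0 ?addr_ge0 // ltW.
have gy_le : dotv g (x1 - xs) <= (eps + delta) * (Num.sqrt P / Num.sqrt (beta * rho)).
  apply: le_trans (dotv_le_normv _ _) _.
  by apply: ler_pM; rewrite ?normv_ge0 // ltW.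
have energy := ipalm_energy_le beta_gt0 rho_gt0 g_sub lE1_E lI1_E.
have two_beta_gy_le := ler_wpM2l (mulr_ge0 (ler0n _ 2) (ltW beta_gt0)) gy_le.
have : Num.sqrt P <= Num.sqrt Q + 2 * (beta * (eps + delta) / Num.sqrt (beta * rho)).
  apply: (sqrtr_le_addr (kkt_dist2_ge0 _ _ _ c_ge0) (kkt_dist2_ge0 _ _ _ c_ge0) e_ge0).
  lra.
lra.
Qed.

End IPALMStep.

Theorem lemma5p3 (R : realType) (n mE mI : nat)
  (f : 'cV[R]_n -> R) (gradf : 'cV[R]_n -> 'cV[R]_n) (Lf mu : R)
  (r : 'cV[R]_n -> \bar R)
  (AE : 'M[R]_(mE, n)) (bE : 'cV[R]_mE) (AI : 'M[R]_(mI, n)) (bI : 'cV[R]_mI)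
  (xs : 'cV[R]_n) (lEs : 'cV[R]_mE) (lIs : 'cV[R]_mI)
  (x : nat -> 'cV[R]_n) (lE : nat -> 'cV[R]_mE) (lI : nat -> 'cV[R]_mI)
  (beta rho epsb : nat -> R) (beta0 rho0 sigma : R) :
  (* assumptions on f *)
  convex_fun f -> has_gradient f gradf -> lipschitz_grad Lf gradf ->
  0 <= mu -> strongly_convex mu f ->
  (* assumptions on r *)
  proper_fun r -> convex_efun r -> lsc_efun r ->
  (* KKT point (xs, [lEs; lIs]) *)
  (exists g, subgrad (Gfun f r) xs g /\
     g + AE^T *m lEs + AI^T *m lIs = 0) ->
  AE *m xs = bE ->
  (forall i, (AI *m xs) i 0 <= bI i 0) ->
  (forall i, 0 <= lIs i 0) ->
  dotv lIs (AI *m xs - bI) = 0 ->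
  (* parameters *)
  0 < beta0 -> 0 < rho0 -> 1 < sigma ->
  (forall k, beta k = beta0 * sigma ^+ k) ->
  (forall k, rho k = rho0 / sigma ^+ k) ->
  (forall k, 0 <= epsb k) ->
  (* iPALM iterates *)
  (Gfun f r (x 0%N) < +oo)%E ->
  (forall k : nat,
     dist0_subdiff_le
       (fun z => (aug_lag f r AE bE AI bI (beta k) z (lE k) (lI k)
                  + (rho k / 2 * normv (z - x k) ^+ 2)%:E)%E)
       (x k.+1) (epsb k)) ->
  (forall k : nat, lE k.+1 = lE k + beta k *: (AE *m x k.+1 - bE)) ->
  (forall k : nat, lI k.+1 = pospart (lI k + beta k *: (AI *m x k.+1 - bI))) ->
  forall k : nat,
    Num.sqrt (beta0 * rho0 * normv (x k.+1 - xs) ^+ 2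
              + (normv (lE k.+1 - lEs) ^+ 2 + normv (lI k.+1 - lIs) ^+ 2))
    <= \sum_(i < k.+1) (2 * beta i * epsb i / Num.sqrt (beta0 * rho0))
       + Num.sqrt (beta0 * rho0 * normv (x 0%N - xs) ^+ 2
              + (normv (lE 0%N - lEs) ^+ 2 + normv (lI 0%N - lIs) ^+ 2)).
Proof.
move=> f_cvx _ _ _ _ [_ r_gtNy] r_cvx _ kkt feasE feasI lIs_ge0 compl
  beta0_gt0 rho0_gt0 sigma_gt1 betaE rhoE eps_ge0 _ dist_le lEE lIE.
have sigmak_gt0 k : 0 < sigma ^+ k by rewrite exprn_gt0 // (lt_trans ltr01).
have beta_gt0 k : 0 < beta k by rewrite betaE mulr_gt0.
have rho_gt0 k : 0 < rho k by rewrite rhoE divr_gt0.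
have beta_rhoE k : beta k * rho k = beta0 * rho0.
  by rewrite betaE rhoE; field; rewrite gt_eqF.
have step k := ipalm_step f_cvx r_cvx r_gtNy kkt feasE feasI lIs_ge0 compl
  (beta_gt0 k) (rho_gt0 k) (beta_rhoE k) (eps_ge0 k) (dist_le k) (lEE k) (lIE k).
elim=> [|k IH]; first by rewrite big_ord1; exact: step.
rewrite big_ord_recr /= [X in _ <= X + _]addrC -addrA.
by apply: le_trans (step k.+1) _; rewrite lerD2l.
Qed.
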